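(* Let $d,n\ge1$, let ${\mathbb X}\subseteq{\mathbb P}^2$ be a set of $\binom{d+1}{2}$ points in generic position, and let ${\bf L}=(L_{lj})$ be a $d\times(d+1)$ matrix of linear forms in $\mathfrak{k}[w_1,w_2,w_3]$ whose signed maximal minors generate $I_{\mathbb X}$. Write $L_{lj}=\sum_{k=1}^3\lambda_{ljk}w_k$ with $\lambda_{ljk}\in\mathfrak{k}$. Let ${\bf E}$ be the $\binom{n+1}{2}d\times\binom{n+2}{2}(d+1)$ matrix whose rows are indexed by pairs $(\beta,l)$ with $\beta\in{\mathbb N}^3$, $|\beta|=n-1$, $1\le l\le d$, whose columns are indexed by pairs $(\alpha,j)$ with $\alpha\in{\mathbb N}^3$, $|\alpha|=n$, $1\le j\le d+1$, and whose $((\beta,l),(\alpha,j))$ entry is $\lambda_{ljk}$ if $w^\alpha=w^\beta w_k$ for some $k\in\{1,2,3\}$ and $0$ otherwise. Then ${\bf E}$ has maximal rank, i.e. rank $\binom{n+1}{2}d$.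
   Context: $\mathfrak{k}$ is algebraically closed of characteristic $0$; $w^\alpha=w_1^{\alpha_1}w_2^{\alpha_2}w_3^{\alpha_3}$ and $|\alpha|=\alpha_1+\alpha_2+\alpha_3$. $I_{\mathbb X}\subseteq\mathfrak{k}[w_1,w_2,w_3]$ is the homogeneous ideal of ${\mathbb X}$. ''Generic position'' means $\dim_{\mathfrak{k}}(\mathfrak{k}[w_1,w_2,w_3]/I_{\mathbb X})_s=\min\{\binom{s+2}{2},|{\mathbb X}|\}$ for all $s$; for such ${\mathbb X}$, $I_{\mathbb X}$ is generated by the maximal minors $F_j=(-1)^{j+1}\det({\bf L}\setminus j\text{-th column})$ of such a $d\times(d+1)$ matrix ${\bf L}$ of linear forms. *)

From HB Require Import structures.
From mathcomp Require Import all_boot all_order all_algebra.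
From mathcomp Require Import mpoly.
Set Implicit Arguments. Unset Strict Implicit. Unset Printing Implicit Defensive.
Import Order.TTheory GRing.Theory.
Local Open Scope ring_scope.

Definition mon3 (m : nat) := {b : 'X_{1..3 < m.+1} | mdeg b == m}.
Definition mon3_val m (b : mon3 m) : 'X_{1..3} := bmnm (sval b).

(* A configuration of N points of P^2, given by representatives in k^3. *)
Definition proj_points (k : fieldType) (N : nat) (P : 'I_N -> 'I_3 -> k) :=
  (forall a, exists i, P a i != 0) /\
  (forall a b, a != b -> ~ exists c : k, forall i, P a i = c * P b i).

(* Homogeneous vanishing ideal I_X: p vanishes at every point of every line
   representing a point of X. *)
Definition IX (k : fieldType) (N : nat) (P : 'I_N -> 'I_3 -> k)
  (p : {mpoly k[3]}) : Prop :=
  forall a (c : k), p.@[fun i => c * P a i] = 0.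

(* dim_k (k[w]/I_X)_s = rank of the evaluation map from degree-s forms
   (monomial basis) to k^X. *)
Definition hilbX (k : fieldType) (N : nat) (P : 'I_N -> 'I_3 -> k) (s : nat) :=
  \rank (\matrix_(i < #|{: mon3 s}|, a < N)
           \prod_(t < 3) P a t ^+ (mon3_val (enum_val i) t)).

Definition generic_position (k : fieldType) (N : nat) (P : 'I_N -> 'I_3 -> k) :=
  forall s, hilbX P s = minn 'C(s.+2, 2) N.

Definition linmx (k : fieldType) (d : nat) (lam : 'I_d -> 'I_d.+1 -> 'I_3 -> k)
  : 'M[{mpoly k[3]}]_(d, d.+1) :=
  \matrix_(l, j) \sum_(t < 3) lam l j t *: 'X_t.

(* Signed maximal minors F_j = (-1)^(j+1) det(L without j-th column)
   (j 1-based in the paper, 0-based here, hence (-1)^j). *)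
Definition Fminor (k : fieldType) (d : nat) (lam : 'I_d -> 'I_d.+1 -> 'I_3 -> k)
  (j : 'I_d.+1) : {mpoly k[3]} :=
  (-1) ^+ j * \det (col' j (linmx lam)).

Definition Eentry (k : fieldType) (d n : nat) (lam : 'I_d -> 'I_d.+1 -> 'I_3 -> k)
  (r : mon3 n.-1 * 'I_d) (c : mon3 n * 'I_d.+1) : k :=
  if [pick t : 'I_3 | mon3_val c.1 == (mon3_val r.1 + U_(t))%MM] is Some t
  then lam r.2 c.2 t else 0.

Definition Emx (k : fieldType) {d : nat} (n : nat) (lam : 'I_d -> 'I_d.+1 -> 'I_3 -> k) :=
  \matrix_(i < #|{: mon3 n.-1 * 'I_d}|, j < #|{: mon3 n * 'I_d.+1}|)
     Eentry lam (enum_val i) (enum_val j).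

From HB Require Import structures.
From mathcomp Require Import all_boot all_order all_algebra.
From mathcomp Require Import mpoly.
Import GRing.Theory.
Local Open Scope ring_scope.

(* Write S_m for the forms of degree m in k[w1,w2,w3].  In monomial bases,
   E is the matrix of the multiplication map (h_l)_l |-> (sum_l h_l L_lj)_j
   from S_(n-1)^d to S_n^(d+1), so its rows are independent as soon as this
   map is injective.  It is, because L has a nonzero maximal minor D over the
   domain k[w]: if h L = 0 then D h = h L' adj(L') = 0, where L' is L with a
   column removed.  Such a minor exists since the minors generate I_X, which
   is nonzero: it contains a product of linear forms, one through each point
   of X.  Genericity of X plays no further role. *)

Lemma mulmx_eq0_det_col' {R : idomainType} {d} {H : 'rV[R]_d}
    {M : 'M[R]_(d, d.+1)} {j} :
  \det (col' j M) != 0 -> H *m M = 0 -> H = 0.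
Proof.
move=> detM_neq0 HM0; have HM'0 : H *m col' j M = 0.
  by rewrite col'Esub mulmx_colsub HM0; apply/matrixP => ? ?; rewrite !mxE.
have : \det (col' j M) *: H = 0.
  by rewrite -mul_mx_scalar -mul_mx_adj mulmxA HM'0 mul0mx.
by move/eqP; rewrite scalemx_eq0 (negbTE detM_neq0) => /eqP.
Qed.

Lemma mon3_inj {m} : injective (@mon3_val m).
Proof. by move=> a b eq_ab; do 2!apply: val_inj. Qed.

Lemma mdeg_mon3 m (b : mon3 m) : mdeg (mon3_val b) = m.
Proof. by case: b => b hb; apply/eqP. Qed.

Lemma mdeg_ltnS {n} {m : 'X_{1..3}} : mdeg m == n -> (mdeg m < n.+1)%N.
Proof. by move/eqP->. Qed.

Definition mon3_of {n} {m : 'X_{1..3}} (hm : mdeg m == n) : mon3 n :=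
  exist _ (BMultinom (mdeg_ltnS hm)) hm.

Lemma mon3_ofK {n m} (hm : mdeg m == n) : mon3_val (mon3_of hm) = m.
Proof. by []. Qed.

Lemma card_mon3 m : #|{: mon3 m}| = 'C(m.+2, 2).
Proof.
(* the notation [sbasis 3 m] of mpoly.v, which is local there *)
pose degm := [seq s2m t | t : m.-tuple 'I_3 <- enum (basis 3 m)].
have perm_degm : perm_eq (map (@mon3_val m) (enum {: mon3 m})) degm.
  apply: uniq_perm; rewrite ?uniq_basis ?(map_inj_uniq mon3_inj) ?enum_uniq //.
  move=> mm; rewrite -basis_cover; apply/mapP/idP => [[b _ ->]|hm].
    by rewrite mdeg_mon3.
  by exists (mon3_of hm); rewrite ?mem_enum.
rewrite cardE -(size_map (@mon3_val m)) (perm_size perm_degm) size_basis.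
by rewrite -[in RHS](bin_sub (_ : 2 <= m.+2)%N) // subSS subSS subn0 addn2.
Qed.

Section EmxAsMultiplication.

Context {k : fieldType} {d n : nat} {lam : 'I_d -> 'I_d.+1 -> 'I_3 -> k}.

Lemma Eentry_sum (r : mon3 n.-1 * 'I_d) (c : mon3 n * 'I_d.+1) :
  Eentry lam r c =
  \sum_(t < 3) lam r.2 c.2 t * (mon3_val c.1 == mon3_val r.1 + U_(t))%MM%:R.
Proof.
rewrite /Eentry; case: pickP => [t ht | no_t]; last first.
  by rewrite big1 // => t _; rewrite no_t mulr0.
rewrite (bigD1 t) //= ht mulr1 big1 ?addr0 // => t' t'_neq_t.
case: eqP => [e|]; last by rewrite mulr0.
move: ht; rewrite e eqm_add2l => /eqP/mnmP/(_ t).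
by rewrite !mnm1E eqxx (negbTE t'_neq_t).
Qed.

Definition forms_of_rV (x : 'rV[k]_#|{: mon3 n.-1 * 'I_d}|) :
    'rV[{mpoly k[3]}]_d :=
  \row_l \sum_(b : mon3 n.-1) x 0 (enum_rank (b, l)) *: 'X_[mon3_val b].

Lemma forms_of_rV_eq0 x : forms_of_rV x = 0 -> x = 0.
Proof.
move=> x0; apply/rowP => i; rewrite mxE -[i]enum_valK.
case: (enum_val i) => b l; move/rowP/(_ l)/(congr1 (mcoeff (mon3_val b))): x0.
rewrite !mxE mcoeff0 raddf_sum (bigD1 b) //= mcoeffZ mcoeffX eqxx mulr1.
rewrite big1 ?addr0 // => b' b'_neq_b.
by rewrite mcoeffZ mcoeffX (inj_eq mon3_inj) (negbTE b'_neq_b) mulr0.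
Qed.

Lemma mcoeff_forms_of_rV_mulmx x (al : mon3 n) j :
  ((forms_of_rV x *m linmx lam) 0 j)@_(mon3_val al) =
  (x *m Emx n lam) 0 (enum_rank (al, j)).
Proof.
rewrite /forms_of_rV !mxE (reindex enum_rank) /=; last first.
  exact/onW_bij/enum_rank_bij.
rewrite raddf_sum.
under [LHS]eq_bigr => l _ do rewrite !mxE mulr_suml raddf_sum.
rewrite exchange_big pair_bigA; apply: eq_bigr => -[b l] _ /=.
rewrite !mxE !enum_rankK Eentry_sum !mulr_sumr raddf_sum.
apply: eq_bigr => t _ /=.
by rewrite -scalerAl -scalerAr -mpolyXD !mcoeffZ mcoeffX eq_sym.
Qed.

Hypothesis n_gt0 : (0 < n)%N.

Lemma forms_of_rV_mulmx_homog x j :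
  (forms_of_rV x *m linmx lam) 0 j \is n.-homog.
Proof.
rewrite -[n in n.-homog](prednK n_gt0) -[n.-1.+1]addn1 mxE rpred_sum // => l _.
rewrite !mxE; apply: dhomogM; apply: rpred_sum => ? _; apply: rpredZ.
  by rewrite dhomogX; apply/eqP/mdeg_mon3.
apply/dhomogP => m; rewrite msuppX inE => /eqP ->; exact: mdeg1.
Qed.

Lemma forms_of_rV_mulmx_eq0 x :
  x *m Emx n lam = 0 -> forms_of_rV x *m linmx lam = 0.
Proof.
move=> xE0; apply/rowP => j; apply/mpolyP => m; rewrite [in RHS]mxE mcoeff0.
have [m_deg_n | m_deg_neq_n] := boolP (mdeg m == n).
  by rewrite -(mon3_ofK m_deg_n) mcoeff_forms_of_rV_mulmx xE0 mxE.
exact: dhomog_nemf_coeff (forms_of_rV_mulmx_homog x j) m_deg_neq_n.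
Qed.

Lemma row_free_Emx :
  (exists j, \det (col' j (linmx lam)) != 0) -> row_free (Emx n lam).
Proof.
move=> [j det_neq0]; apply: inj_row_free => x /forms_of_rV_mulmx_eq0 HL0.
exact/forms_of_rV_eq0/(mulmx_eq0_det_col' det_neq0).
Qed.

End EmxAsMultiplication.

Definition line_through {R : comNzRingType} (v : 'I_3 -> R) : {mpoly R[3]} :=
  if v 0 == 0 then 'X_0 else v 0 *: 'X_1 - v 1 *: 'X_0.

Lemma line_through_neq0 (R : comNzRingType) (v : 'I_3 -> R) :
  line_through v != 0.
Proof.
apply/eqP; rewrite /line_through; case: ifPn => [_ | v0] L0.
  have := congr1 (meval (fun=> 1)) L0.
  by rewrite mevalXU meval0; apply/eqP/oner_neq0.
have := congr1 (meval (fun i : 'I_3 => (i == 1)%:R)) L0.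
by rewrite mevalB !mevalZ !mevalXU meval0 mulr1 mulr0 subr0; apply/eqP.
Qed.

Lemma line_through_vanishes (R : comNzRingType) (v : 'I_3 -> R) c :
  (line_through v).@[fun i => c * v i] = 0.
Proof.
rewrite /line_through; case: ifPn => [/eqP v0|_].
  by rewrite mevalXU v0 mulr0.
rewrite mevalB !mevalZ !mevalXU.
by rewrite mulrCA [v 1 * _]mulrCA [v 1 * v 0]mulrC subrr.
Qed.

Lemma exists_IX_neq0 {k : fieldType} {N} (P : 'I_N -> 'I_3 -> k) :
  exists2 p : {mpoly k[3]}, p != 0 & IX P p.
Proof.
exists (\prod_a line_through (P a)).
  by rewrite prodf_seq_neq0; apply/allP => a _; exact: line_through_neq0.
move=> a c; rewrite rmorph_prod (bigD1 a) //=.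
by rewrite line_through_vanishes mul0r.
Qed.

Lemma exists_det_col'_neq0 {k : fieldType} {d}
    {lam : 'I_d -> 'I_d.+1 -> 'I_3 -> k}
    {p : {mpoly k[3]}} {g : 'I_d.+1 -> {mpoly k[3]}} :
  p != 0 -> p = \sum_j g j * Fminor lam j ->
  exists j, \det (col' j (linmx lam)) != 0.
Proof.
move=> p_neq0 p_eq; apply/existsP; apply: contraNT p_neq0 => /existsPn all0.
by rewrite p_eq big1 // => j _; rewrite /Fminor (eqP (negPn (all0 j))) !mulr0.
Qed.

Theorem lemma2p2 (k : closedFieldType) (hchar : [pchar k] =i pred0)
  (d n : nat) (hd : (0 < d)%N) (hn : (0 < n)%N)
  (P : 'I_('C(d.+1, 2)) -> 'I_3 -> k)
  (hP : proj_points P) (hgen : generic_position P)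
  (lam : 'I_d -> 'I_d.+1 -> 'I_3 -> k)
  (hgens : forall p : {mpoly k[3]},
      IX P p <-> exists g : 'I_d.+1 -> {mpoly k[3]},
                   p = \sum_(j < d.+1) g j * Fminor lam j) :
  \rank (Emx n lam) = ('C(n.+1, 2) * d)%N.
Proof.
have [p p_neq0 /hgens [g p_eq]] := exists_IX_neq0 P.
have minor_neq0 := exists_det_col'_neq0 p_neq0 p_eq.
rewrite (eqP (row_free_Emx hn minor_neq0)).
by rewrite card_prod card_mon3 card_ord prednK.
Qed.
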